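(* Let $\mathcal{L}$ and $\mathcal{K}$ be $2$-categories with pseudolimits of arrows, and let $U\colon\mathcal{L}\to\mathcal{K}$ be a $2$-functor preserving pseudolimits of arrows such that each functor $U\colon\mathcal{L}(A,B)\to\mathcal{K}(UA,UB)$ on hom-categories is a discrete isofibration of categories. Then $U$ reflects representable isofibrations and normal isofibrations. Furthermore, the following are equivalent: (1) $U$ reflects equivalences; (2) $U$ reflects retract equivalences; (3) $U$ reflects normal retract equivalences; and these together imply (4) $U$ reflects injective equivalences.
   Context: A functor is a discrete isofibration of categories if every isomorphism with codomain in the image has a unique lift with the given codomain. An equivalence is a morphism $f\colon A\to B$ with $g\colon B\to A$ and invertible $2$-cells $1\cong gf$, $fg\cong 1$; an injective equivalence is an equivalence with a retraction; a retract equivalence is an equivalence with a section; a normal retract equivalence is a retract equivalence which is also a normal isofibration. The pseudolimit of an arrow $f\colon A\to B$ is an object $L_f$ with $u_f\colon L_f\to A$, $v_f\colon L_f\to B$ and invertible $\lambda_f\colon v_f\cong fu_f$, universal among such data; $U$ preserves it if its image is a pseudolimit of $Uf$. $U$ reflects a property if whenever $Uf$ has it, so does $f$. A morphism $f\colon A\to B$ is a representable isofibration if for every object $X$, given $g\colon X\to A$, $h\colon X\to B$ and invertible $\alpha\colon fg\cong h$, there exist $h'\colon X\to A$ and invertible $\alpha'\colon g\cong h'$ with $f\alpha'=\alpha$. A cleavage is a choice of such $(\alpha',h')$ for every $(g,\alpha,h)$, natural in $X$; it is normal if $\alpha'$ is an identity whenever $\alpha$ is. A normal isofibration is a representable isofibration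 admitting a normal cleavage. *)

(** Vertical composition [vcomp b a] (= b . a, "a then b") is total but only
    meaningful when [tgt a = src b]; whiskering on both sides. *)

Record TwoCatData := {
  obj : Type;
  hom : obj -> obj -> Type;
  cell : obj -> obj -> Type;
  src : forall A B, cell A B -> hom A B;
  tgt : forall A B, cell A B -> hom A B;
  id1 : forall A, hom A A;
  comp1 : forall A B C, hom B C -> hom A B -> hom A C;
  id2 : forall A B, hom A B -> cell A B;
  vcomp : forall A B, cell A B -> cell A B -> cell A B;
  lwhisk : forall A B C, hom B C -> cell A B -> cell A C;
  rwhisk : forall A B C, cell B C -> hom A B -> cell A C
}.

Arguments obj : clear implicits.
Arguments hom {_} _ _.
Arguments cell {_} _ _.
Arguments src {_ _ _} _.
Arguments tgt {_ _ _} _.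
Arguments id1 {_} _.
Arguments comp1 {_ _ _ _} _ _.
Arguments id2 {_ _ _} _.
Arguments vcomp {_ _ _} _ _.
Arguments lwhisk {_ _ _ _} _ _.
Arguments rwhisk {_ _ _ _} _ _.

Definition is_2cat (CC : TwoCatData) : Prop :=
  (forall (A B : obj CC) (f : hom A B), comp1 f (id1 A) = f) /\
  (forall (A B : obj CC) (f : hom A B), comp1 (id1 B) f = f) /\
  (forall (A B C D : obj CC) (f : hom A B) (g : hom B C) (h : hom C D),
      comp1 h (comp1 g f) = comp1 (comp1 h g) f) /\
  (forall (A B : obj CC) (f : hom A B), src (id2 f) = f /\ tgt (id2 f) = f) /\
  (forall (A B : obj CC) (a b : cell A B), tgt a = src b ->
      src (vcomp b a) = src a /\ tgt (vcomp b a) = tgt b) /\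
  (forall (A B : obj CC) (a : cell A B), vcomp a (id2 (src a)) = a) /\
  (forall (A B : obj CC) (a : cell A B), vcomp (id2 (tgt a)) a = a) /\
  (forall (A B : obj CC) (a b c : cell A B), tgt a = src b -> tgt b = src c ->
      vcomp c (vcomp b a) = vcomp (vcomp c b) a) /\
  (forall (A B C : obj CC) (h : hom B C) (a : cell A B),
      src (lwhisk h a) = comp1 h (src a) /\ tgt (lwhisk h a) = comp1 h (tgt a)) /\
  (forall (A B C : obj CC) (a : cell B C) (k : hom A B),
      src (rwhisk a k) = comp1 (src a) k /\ tgt (rwhisk a k) = comp1 (tgt a) k) /\
  (forall (A B C : obj CC) (h : hom B C) (f : hom A B), lwhisk h (id2 f) = id2 (comp1 h f)) /\
  (forall (A B C : obj CC) (f : hom B C) (k : hom A B), rwhisk (id2 f) k = id2 (comp1 f k)) /\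
  (forall (A B C : obj CC) (h : hom B C) (a b : cell A B), tgt a = src b ->
      lwhisk h (vcomp b a) = vcomp (lwhisk h b) (lwhisk h a)) /\
  (forall (A B C : obj CC) (a b : cell B C) (k : hom A B), tgt a = src b ->
      rwhisk (vcomp b a) k = vcomp (rwhisk b k) (rwhisk a k)) /\
  (forall (A B : obj CC) (a : cell A B), lwhisk (id1 B) a = a) /\
  (forall (A B : obj CC) (a : cell A B), rwhisk a (id1 A) = a) /\
  (forall (A B C D : obj CC) (h : hom B C) (h' : hom C D) (a : cell A B),
      lwhisk (comp1 h' h) a = lwhisk h' (lwhisk h a)) /\
  (forall (A B C D : obj CC) (k' : hom A B) (k : hom B C) (a : cell C D),
      rwhisk a (comp1 k k') = rwhisk (rwhisk a k) k') /\
  (forall (A B C D : obj CC) (k : hom A B) (a : cell B C) (h : hom C D),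
      lwhisk h (rwhisk a k) = rwhisk (lwhisk h a) k) /\
  (forall (A B C : obj CC) (a : cell A B) (b : cell B C),
      vcomp (lwhisk (tgt b) a) (rwhisk b (src a))
      = vcomp (rwhisk b (tgt a)) (lwhisk (src b) a)).

Record TwoCat := { tc_data :> TwoCatData; tc_ax : is_2cat tc_data }.

Definition invertible {C : TwoCatData} {A B : obj C} (a : cell A B) : Prop :=
  exists b : cell A B, src b = tgt a /\ tgt b = src a /\
    vcomp b a = id2 (src a) /\ vcomp a b = id2 (tgt a).

Record TwoFunctorData (L K : TwoCat) := {
  F0 : obj L -> obj K;
  F1 : forall A B : obj L, hom A B -> hom (F0 A) (F0 B);
  F2 : forall A B : obj L, cell A B -> cell (F0 A) (F0 B)
}.
Arguments F0 {_ _} _ _.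
Arguments F1 {_ _} _ {_ _} _.
Arguments F2 {_ _} _ {_ _} _.

Definition is_2functor {L K : TwoCat} (U : TwoFunctorData L K) : Prop :=
    (forall A : obj L, F1 U (id1 A) = id1 (F0 U A)) /\
    (forall (A B C : obj L) (g : hom B C) (f : hom A B),
        F1 U (comp1 g f) = comp1 (F1 U g) (F1 U f)) /\
    (forall (A B : obj L) (a : cell A B),
        src (F2 U a) = F1 U (src a) /\ tgt (F2 U a) = F1 U (tgt a)) /\
    (forall (A B : obj L) (f : hom A B), F2 U (id2 f) = id2 (F1 U f)) /\
    (forall (A B : obj L) (a b : cell A B), tgt a = src b ->
        F2 U (vcomp b a) = vcomp (F2 U b) (F2 U a)) /\
    (forall (A B C : obj L) (h : hom B C) (a : cell A B),
        F2 U (lwhisk h a) = lwhisk (F1 U h) (F2 U a)) /\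
    (forall (A B C : obj L) (a : cell B C) (k : hom A B),
        F2 U (rwhisk a k) = rwhisk (F2 U a) (F1 U k)).

Record TwoFunctor (L K : TwoCat) :=
  { tf_data :> TwoFunctorData L K; tf_ax : is_2functor tf_data }.

Definition hom_discrete_isofibrations {L K : TwoCat} (U : TwoFunctor L K) : Prop :=
  forall (A B : obj L) (f : hom A B) (t : cell (F0 U A) (F0 U B)),
    tgt t = F1 U f -> invertible t ->
    exists! a : cell A B, tgt a = f /\ invertible a /\ F2 U a = t.

(** * Pseudolimits of arrows
    (P, u, v, lam : v => f u invertible) such that for every X the functor
    C(X,P) -> PsCone(X) is an isomorphism of categories. *)
Definition is_pseudolimit {C : TwoCatData} {A B : obj C} (f : hom A B)
    (P : obj C) (u : hom P A) (v : hom P B) (lam : cell P B) : Prop :=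
  src lam = v /\ tgt lam = comp1 f u /\ invertible lam /\
  (* bijection on objects *)
  (forall X (a : hom X A) (b : hom X B) (be : cell X B),
      src be = b -> tgt be = comp1 f a -> invertible be ->
      exists! m : hom X P, comp1 u m = a /\ comp1 v m = b /\ rwhisk lam m = be) /\
  (* bijection on morphisms *)
  (forall X (m m' : hom X P) (phi : cell X A) (psi : cell X B),
      src phi = comp1 u m -> tgt phi = comp1 u m' ->
      src psi = comp1 v m -> tgt psi = comp1 v m' ->
      vcomp (lwhisk f phi) (rwhisk lam m) = vcomp (rwhisk lam m') psi ->
      exists! s : cell X P, src s = m /\ tgt s = m' /\
        lwhisk u s = phi /\ lwhisk v s = psi).

Definition has_pseudolimits_of_arrows (C : TwoCat) : Prop :=
  forall (A B : obj C) (f : hom A B),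
    exists P u v lam, @is_pseudolimit C A B f P u v lam.

Definition preserves_pseudolimits_of_arrows {L K : TwoCat} (U : TwoFunctor L K) : Prop :=
  forall (A B : obj L) (f : hom A B) P u v lam,
    is_pseudolimit f P u v lam ->
    is_pseudolimit (F1 U f) (F0 U P) (F1 U u) (F1 U v) (F2 U lam).

Definition repr_isofibration (C : TwoCat) (A B : obj C) (f : hom A B) : Prop :=
  forall X (g : hom X A) (h : hom X B) (al : cell X B),
    src al = comp1 f g -> tgt al = h -> invertible al ->
    exists (h' : hom X A) (al' : cell X A),
      src al' = g /\ tgt al' = h' /\ invertible al' /\ lwhisk f al' = al.

(** A cleavage chooses, for every (g, al : f g ~= h), a lift al' : g ~= h'
    (with h' = tgt al'); the 1-cell h = tgt al is determined by al. *)
Definition cleavage_data {C : TwoCat} {A B : obj C} (f : hom A B) : Type :=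
  forall X (g : hom X A) (al : cell X B),
    src al = comp1 f g -> invertible al -> cell X A.

Definition is_cleavage {C : TwoCat} {A B : obj C} (f : hom A B)
    (cl : cleavage_data f) : Prop :=
  (forall X g al (p : src al = comp1 f g) (q : invertible al),
      src (cl X g al p q) = g /\ invertible (cl X g al p q) /\
      lwhisk f (cl X g al p q) = al) /\
  (forall Y X (k : hom Y X) (g : hom X A) (al : cell X B)
          (p : src al = comp1 f g) (q : invertible al)
          (p' : src (rwhisk al k) = comp1 f (comp1 g k)) (q' : invertible (rwhisk al k)),
      cl Y (comp1 g k) (rwhisk al k) p' q' = rwhisk (cl X g al p q) k).

Definition is_normal_cleavage {C : TwoCat} {A B : obj C} (f : hom A B)
    (cl : cleavage_data f) : Prop :=
  is_cleavage f cl /\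
  (forall X (g : hom X A) (p : src (id2 (comp1 f g)) = comp1 f g)
          (q : invertible (id2 (comp1 f g))),
      cl X g (id2 (comp1 f g)) p q = id2 g).

Definition normal_isofibration (C : TwoCat) (A B : obj C) (f : hom A B) : Prop :=
  repr_isofibration C A B f /\ exists cl : cleavage_data f, is_normal_cleavage f cl.

Definition equivalence (C : TwoCat) (A B : obj C) (f : hom A B) : Prop :=
  exists (g : hom B A) (eta : cell A A) (eps : cell B B),
    src eta = id1 A /\ tgt eta = comp1 g f /\ invertible eta /\
    src eps = comp1 f g /\ tgt eps = id1 B /\ invertible eps.

Definition injective_equivalence (C : TwoCat) (A B : obj C) (f : hom A B) : Prop :=
  equivalence C A B f /\ exists r : hom B A, comp1 r f = id1 A.

Definition retract_equivalence (C : TwoCat) (A B : obj C) (f : hom A B) : Prop :=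
  equivalence C A B f /\ exists s : hom B A, comp1 f s = id1 B.

Definition normal_retract_equivalence (C : TwoCat) (A B : obj C) (f : hom A B) : Prop :=
  retract_equivalence C A B f /\ normal_isofibration C A B f.

Definition reflects {L K : TwoCat} (U : TwoFunctor L K)
    (P : forall (C : TwoCat) (A B : obj C), hom A B -> Prop) : Prop :=
  forall (A B : obj L) (f : hom A B), P K _ _ (F1 U f) -> P L A B f.

From Stdlib Require Import IndefiniteDescription ProofIrrelevance.

(* Since every hom-functor of U is a discrete isofibration, invertible 2-cells
   lift uniquely along U, with prescribed source or with prescribed target.
   Lifting the chosen lifts of a (normal) cleavage of U f gives one of f.  If f
   is an equivalence with pseudo-inverse g and counit eps, and U f has a section
   s, there is an invertible d : U g => s with (U f) d = U eps; lifting d and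
   comparing f d with eps gives a strict section of f, and dually for
   retractions.  Finally, if U f is an equivalence, factor f as v i through its
   pseudolimit of arrows: i is an equivalence and v a normal isofibration, and
   both facts survive U, so U v is a normal retract equivalence; reflecting it
   makes v, hence f = v i, an equivalence. *)

Ltac conjunct ax :=
  first [ solve [ intros; apply ax; assumption ]
        | conjunct (proj1 ax) | conjunct (proj2 ax) ].

Section TwoCategoryLaws.
Context {C : TwoCat}.
Implicit Types A B D E : obj C.

Lemma comp1_id_r {A B} (f : hom A B) : comp1 f (id1 A) = f.
Proof. conjunct (tc_ax C). Qed.
Lemma comp1_id_l {A B} (f : hom A B) : comp1 (id1 B) f = f.
Proof. conjunct (tc_ax C). Qed.
Lemma comp1_assoc {A B D E} (f : hom A B) (g : hom B D) (h : hom D E) :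
  comp1 (comp1 h g) f = comp1 h (comp1 g f).
Proof. symmetry. conjunct (tc_ax C). Qed.
Lemma src_id2 {A B} (f : hom A B) : src (id2 f) = f.
Proof. conjunct (tc_ax C). Qed.
Lemma tgt_id2 {A B} (f : hom A B) : tgt (id2 f) = f.
Proof. conjunct (tc_ax C). Qed.
Lemma src_vcomp {A B} (a b : cell A B) : tgt a = src b -> src (vcomp b a) = src a.
Proof. conjunct (tc_ax C). Qed.
Lemma tgt_vcomp {A B} (a b : cell A B) : tgt a = src b -> tgt (vcomp b a) = tgt b.
Proof. conjunct (tc_ax C). Qed.
Lemma vcomp_id_r {A B} (a : cell A B) f : src a = f -> vcomp a (id2 f) = a.
Proof. intros <-. conjunct (tc_ax C). Qed.
Lemma vcomp_id_l {A B} (a : cell A B) f : tgt a = f -> vcomp (id2 f) a = a.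
Proof. intros <-. conjunct (tc_ax C). Qed.
Lemma vcomp_assoc {A B} (a b c : cell A B) : tgt a = src b -> tgt b = src c ->
  vcomp c (vcomp b a) = vcomp (vcomp c b) a.
Proof. conjunct (tc_ax C). Qed.
Lemma src_lwhisk {A B D} (h : hom B D) (a : cell A B) : src (lwhisk h a) = comp1 h (src a).
Proof. conjunct (tc_ax C). Qed.
Lemma tgt_lwhisk {A B D} (h : hom B D) (a : cell A B) : tgt (lwhisk h a) = comp1 h (tgt a).
Proof. conjunct (tc_ax C). Qed.
Lemma src_rwhisk {A B D} (a : cell B D) (k : hom A B) : src (rwhisk a k) = comp1 (src a) k.
Proof. conjunct (tc_ax C). Qed.
Lemma tgt_rwhisk {A B D} (a : cell B D) (k : hom A B) : tgt (rwhisk a k) = comp1 (tgt a) k.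
Proof. conjunct (tc_ax C). Qed.
Lemma lwhisk_id2 {A B D} (h : hom B D) (f : hom A B) : lwhisk h (id2 f) = id2 (comp1 h f).
Proof. conjunct (tc_ax C). Qed.
Lemma rwhisk_id2 {A B D} (f : hom B D) (k : hom A B) : rwhisk (id2 f) k = id2 (comp1 f k).
Proof. conjunct (tc_ax C). Qed.
Lemma lwhisk_vcomp {A B D} (h : hom B D) (a b : cell A B) : tgt a = src b ->
  lwhisk h (vcomp b a) = vcomp (lwhisk h b) (lwhisk h a).
Proof. conjunct (tc_ax C). Qed.
Lemma rwhisk_vcomp {A B D} (a b : cell B D) (k : hom A B) : tgt a = src b ->
  rwhisk (vcomp b a) k = vcomp (rwhisk b k) (rwhisk a k).
Proof. conjunct (tc_ax C). Qed.
Lemma lwhisk_id1 {A B} (a : cell A B) : lwhisk (id1 B) a = a.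
Proof. conjunct (tc_ax C). Qed.
Lemma rwhisk_id1 {A B} (a : cell A B) : rwhisk a (id1 A) = a.
Proof. conjunct (tc_ax C). Qed.
Lemma lwhisk_comp1 {A B D E} (h : hom B D) (h' : hom D E) (a : cell A B) :
  lwhisk (comp1 h' h) a = lwhisk h' (lwhisk h a).
Proof. conjunct (tc_ax C). Qed.
Lemma rwhisk_comp1 {A B D E} (k' : hom A B) (k : hom B D) (a : cell D E) :
  rwhisk a (comp1 k k') = rwhisk (rwhisk a k) k'.
Proof. conjunct (tc_ax C). Qed.
Lemma lwhisk_rwhisk {A B D E} (k : hom A B) (a : cell B D) (h : hom D E) :
  lwhisk h (rwhisk a k) = rwhisk (lwhisk h a) k.
Proof. conjunct (tc_ax C). Qed.
Lemma interchange {A B D} (a : cell A B) (b : cell B D) :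
  vcomp (lwhisk (tgt b) a) (rwhisk b (src a)) = vcomp (rwhisk b (tgt a)) (lwhisk (src b) a).
Proof. conjunct (tc_ax C). Qed.
End TwoCategoryLaws.

Section TwoFunctorLaws.
Context {L K : TwoCat} (U : TwoFunctor L K).
Implicit Types A B D : obj L.

Lemma F1_id1 {A} : F1 U (id1 A) = id1 (F0 U A).
Proof. conjunct (tf_ax _ _ U). Qed.
Lemma F1_comp1 {A B D} (g : hom B D) (f : hom A B) : F1 U (comp1 g f) = comp1 (F1 U g) (F1 U f).
Proof. conjunct (tf_ax _ _ U). Qed.
Lemma src_F2 {A B} (a : cell A B) : src (F2 U a) = F1 U (src a).
Proof. conjunct (tf_ax _ _ U). Qed.
Lemma tgt_F2 {A B} (a : cell A B) : tgt (F2 U a) = F1 U (tgt a).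
Proof. conjunct (tf_ax _ _ U). Qed.
Lemma F2_id2 {A B} (f : hom A B) : F2 U (id2 f) = id2 (F1 U f).
Proof. conjunct (tf_ax _ _ U). Qed.
Lemma F2_vcomp {A B} (a b : cell A B) : tgt a = src b -> F2 U (vcomp b a) = vcomp (F2 U b) (F2 U a).
Proof. conjunct (tf_ax _ _ U). Qed.
Lemma F2_lwhisk {A B D} (h : hom B D) (a : cell A B) : F2 U (lwhisk h a) = lwhisk (F1 U h) (F2 U a).
Proof. conjunct (tf_ax _ _ U). Qed.
Lemma F2_rwhisk {A B D} (a : cell B D) (k : hom A B) : F2 U (rwhisk a k) = rwhisk (F2 U a) (F1 U k).
Proof. conjunct (tf_ax _ _ U). Qed.
End TwoFunctorLaws.

Hint Rewrite @comp1_id_r @comp1_id_l @comp1_assoc @F1_id1 @F1_comp1 : comp1.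

Lemma comp1_assoc_rewrite {C : TwoCat} {A B D X : obj C} (a : hom B D) (b : hom A B) (c : hom A D) :
  comp1 a b = c -> forall x : hom X A, comp1 a (comp1 b x) = comp1 c x.
Proof. intros <- x. symmetry; apply comp1_assoc. Qed.

Ltac boundary :=
  repeat first
    [ rewrite src_id2 | rewrite tgt_id2 | rewrite src_lwhisk | rewrite tgt_lwhisk
    | rewrite src_rwhisk | rewrite tgt_rwhisk | rewrite src_F2 | rewrite tgt_F2
    | (rewrite src_vcomp by boundary) | (rewrite tgt_vcomp by boundary)
    | match goal with
      | H : src ?x = _ |- context [src ?x] => rewrite H
      | H : tgt ?x = _ |- context [tgt ?x] => rewrite H
      end
    | progress (autorewrite with comp1)
    | match goal with
      | H : comp1 _ _ = _ |- _ => rewrite H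
      | H : comp1 _ _ = _ |- _ => rewrite (comp1_assoc_rewrite _ _ _ H)
      end ];
  try reflexivity.

Definition is_inverse {C : TwoCatData} {A B : obj C} (a b : cell A B) : Prop :=
  src b = tgt a /\ tgt b = src a /\ vcomp b a = id2 (src a) /\ vcomp a b = id2 (tgt a).

Section Inverses.
Context {C : TwoCat} {A B : obj C}.

Lemma is_inverse_sym (a b : cell A B) : is_inverse a b -> is_inverse b a.
Proof. intros (h1&h2&h3&h4); unfold is_inverse; rewrite h1, h2; auto. Qed.

Lemma invertible_inverse (a b : cell A B) : is_inverse a b -> invertible b.
Proof. intros H; exists a; apply is_inverse_sym; auto. Qed.

Lemma is_inverse_unique (a b c : cell A B) : is_inverse a b -> is_inverse a c -> b = c.
Proof.
  intros (h1&h2&h3&h4) (k1&k2&k3&k4).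
  rewrite <- (vcomp_id_r b (tgt a)), <- k4, vcomp_assoc, h3 by congruence.
  apply vcomp_id_l; congruence.
Qed.

Lemma vcomp_cancel_invertible_r (a b x : cell A B) :
  invertible x -> tgt x = src a -> tgt x = src b -> vcomp a x = vcomp b x -> a = b.
Proof.
  intros [x' (i1&i2&i3&i4)] ea eb E.
  rewrite <- (vcomp_id_r a (tgt x)), <- (vcomp_id_r b (tgt x)), <- i4 by auto.
  rewrite !vcomp_assoc, E by congruence; auto.
Qed.

Lemma vcomp_square_inverse (a a' b b' x y : cell A B) :
  is_inverse a a' -> is_inverse b b' -> tgt x = src a -> tgt b = src y ->
  vcomp a x = vcomp y b -> vcomp a' y = vcomp x b'.
Proof.
  intros (a1&a2&a3&a4) (b1&b2&b3&b4) ex ey E.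
  assert (sx : src x = src b).
  { rewrite <- (src_vcomp x a), E, src_vcomp by auto. reflexivity. }
  rewrite <- (vcomp_id_r y (tgt b)), <- b4, (vcomp_assoc b' b y), <- E,
    (vcomp_assoc b' (vcomp a x) a'), (vcomp_assoc x a a'), a3, vcomp_id_l
    by (rewrite ?tgt_vcomp, ?src_vcomp; congruence).
  reflexivity.
Qed.

Lemma is_inverse_id2 (f : hom A B) : is_inverse (id2 f) (id2 f).
Proof. unfold is_inverse; rewrite !src_id2, !tgt_id2, vcomp_id_l by apply tgt_id2; auto. Qed.

Lemma invertible_id2 (f : hom A B) : invertible (id2 f).
Proof. exists (id2 f); apply is_inverse_id2. Qed.

Lemma is_inverse_vcomp (a a' b b' : cell A B) :
  is_inverse a a' -> is_inverse b b' -> tgt a = src b -> is_inverse (vcomp b a) (vcomp a' b').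
Proof.
  intros (h1&h2&h3&h4) (k1&k2&k3&k4) e; unfold is_inverse.
  rewrite !src_vcomp, !tgt_vcomp by congruence. repeat split; auto.
  - rewrite vcomp_assoc, <- (vcomp_assoc b b' a'), k3, <- e, vcomp_id_r
      by (rewrite ?tgt_vcomp, ?src_vcomp; congruence). auto.
  - rewrite vcomp_assoc, <- (vcomp_assoc a' a b), h4, e, vcomp_id_r
      by (rewrite ?tgt_vcomp, ?src_vcomp; congruence). auto.
Qed.

Lemma invertible_vcomp (a b : cell A B) :
  invertible a -> invertible b -> tgt a = src b -> invertible (vcomp b a).
Proof. intros [a' H] [b' H'] e; exists (vcomp a' b'); apply is_inverse_vcomp; auto. Qed.

Lemma is_inverse_lwhisk {D : obj C} (h : hom B D) (a b : cell A B) :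
  is_inverse a b -> is_inverse (lwhisk h a) (lwhisk h b).
Proof.
  intros (h1&h2&h3&h4); unfold is_inverse. rewrite !src_lwhisk, !tgt_lwhisk, h1, h2.
  rewrite <- !lwhisk_vcomp, h3, h4, !lwhisk_id2 by auto; auto.
Qed.

Lemma invertible_lwhisk {D : obj C} (h : hom B D) (a : cell A B) :
  invertible a -> invertible (lwhisk h a).
Proof. intros [b H]; exists (lwhisk h b); apply is_inverse_lwhisk; auto. Qed.

Lemma is_inverse_rwhisk {D : obj C} (k : hom D A) (a b : cell A B) :
  is_inverse a b -> is_inverse (rwhisk a k) (rwhisk b k).
Proof.
  intros (h1&h2&h3&h4); unfold is_inverse. rewrite !src_rwhisk, !tgt_rwhisk, h1, h2.
  rewrite <- !rwhisk_vcomp, h3, h4, !rwhisk_id2 by auto; auto.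
Qed.

Lemma invertible_rwhisk {D : obj C} (k : hom D A) (a : cell A B) :
  invertible a -> invertible (rwhisk a k).
Proof. intros [b H]; exists (rwhisk b k); apply is_inverse_rwhisk; auto. Qed.
End Inverses.

Lemma is_inverse_F2 {L K : TwoCat} (U : TwoFunctor L K) {A B : obj L} (a b : cell A B) :
  is_inverse a b -> is_inverse (F2 U a) (F2 U b).
Proof.
  intros (h1&h2&h3&h4); unfold is_inverse. rewrite !src_F2, !tgt_F2, h1, h2.
  rewrite <- !F2_vcomp, h3, h4, !F2_id2 by auto; auto.
Qed.

Lemma invertible_F2 {L K : TwoCat} (U : TwoFunctor L K) {A B : obj L} (a : cell A B) :
  invertible a -> invertible (F2 U a).
Proof. intros [b H]; exists (F2 U b); apply is_inverse_F2; auto. Qed.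

Lemma cleavage_congr {C : TwoCat} {A B : obj C} (f : hom A B) (cl : cleavage_data f)
    X g1 g2 al1 al2 p1 q1 p2 q2 :
  g1 = g2 -> al1 = al2 -> cl X g1 al1 p1 q1 = cl X g2 al2 p2 q2.
Proof. intros <- <-. rewrite (proof_irrelevance _ p1 p2), (proof_irrelevance _ q1 q2). auto. Qed.

Lemma normal_isofibration_of_lifts {C : TwoCat} {A B : obj C} (f : hom A B)
    (lift : forall X, hom X A -> cell X B -> cell X A -> Prop) :
  (forall X g al, src al = comp1 f g -> invertible al -> exists s, lift X g al s) ->
  (forall X g al s, src al = comp1 f g -> invertible al -> lift X g al s ->
     src s = g /\ invertible s /\ lwhisk f s = al) ->
  (forall X g al s1 s2, src al = comp1 f g -> invertible al ->
     lift X g al s1 -> lift X g al s2 -> s1 = s2) ->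
  (forall Y X (k : hom Y X) g al s, src al = comp1 f g -> invertible al ->
     lift X g al s -> lift Y (comp1 g k) (rwhisk al k) (rwhisk s k)) ->
  (forall X g, lift X g (id2 (comp1 f g)) (id2 g)) ->
  normal_isofibration C A B f.
Proof.
  intros Hex Hspec Huniq Hnat Hid.
  pose (cl := fun X g al (p : src al = comp1 f g) (q : invertible al) =>
                proj1_sig (constructive_indefinite_description _ (Hex X g al p q))).
  assert (Hcl : forall X g al p q, lift X g al (cl X g al p q)).
  { intros; apply proj2_sig. }
  split; [|exists cl; split; [split|]].
  - intros X g h al p <- q. destruct (Hex X g al p q) as [s Hs].
    destruct (Hspec X g al s p q Hs) as (s1&s2&s3). exists (tgt s), s; auto.
  - intros X g al p q. apply (Hspec X g al); auto.
  - intros Y X k g al p q p' q'.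
    apply (Huniq Y (comp1 g k) (rwhisk al k)); auto.
  - intros X g p q. apply (Huniq X g (id2 (comp1 f g))); auto.
Qed.

Section HomDiscreteIsofibrations.
Context {L K : TwoCat} (U : TwoFunctor L K) (HD : hom_discrete_isofibrations U).

Lemma lift_with_tgt {A B : obj L} (f : hom A B) (t : cell (F0 U A) (F0 U B)) :
  tgt t = F1 U f -> invertible t -> exists a, tgt a = f /\ invertible a /\ F2 U a = t.
Proof. intros e i. destruct (HD A B f t e i) as [a [Ha _]]. eauto. Qed.

Lemma lift_unique_tgt {A B : obj L} (a b : cell A B) :
  tgt a = tgt b -> invertible a -> invertible b -> F2 U a = F2 U b -> a = b.
Proof.
  intros e ia ib E.
  destruct (HD A B (tgt a) (F2 U a) (tgt_F2 U a) (invertible_F2 U a ia)) as [x [_ Hu]].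
  transitivity x; [symmetry|]; apply Hu; auto.
Qed.

Lemma lift_with_src {A B : obj L} (g : hom A B) (t : cell (F0 U A) (F0 U B)) :
  src t = F1 U g -> invertible t -> exists a, src a = g /\ invertible a /\ F2 U a = t.
Proof.
  intros e [t' Ht].
  destruct (lift_with_tgt g t') as (a'&h1&[a Ha]&h3).
  - destruct Ht as (?&?&?&?); congruence.
  - apply (invertible_inverse t); auto.
  - exists a. destruct Ha as (k1&k2&k3&k4). repeat split.
    + congruence.
    + apply (invertible_inverse a'); repeat split; auto.
    + apply (is_inverse_unique (F2 U a')).
      * apply is_inverse_F2; repeat split; auto.
      * rewrite h3; apply is_inverse_sym; auto.
Qed.

Lemma lift_unique_src {A B : obj L} (a b : cell A B) :
  src a = src b -> invertible a -> invertible b -> F2 U a = F2 U b -> a = b.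
Proof.
  intros e [a' Ha] [b' Hb] E.
  assert (a' = b') as <-.
  { apply lift_unique_tgt.
    - destruct Ha as (?&?&?&?), Hb as (?&?&?&?); congruence.
    - apply (invertible_inverse a); auto.
    - apply (invertible_inverse b); auto.
    - apply (is_inverse_unique (F2 U a)); [apply is_inverse_F2; auto|].
      rewrite E; apply is_inverse_F2; auto. }
  apply (is_inverse_unique a'); apply is_inverse_sym; auto.
Qed.

Lemma reflects_repr_isofibration : reflects U repr_isofibration.
Proof.
  intros A B f Hf X g h al e1 e2 i.
  destruct (Hf (F0 U X) (F1 U g) (F1 U h) (F2 U al)) as (h''&be&b1&b2&b3&b4).
  - boundary.
  - boundary.
  - apply invertible_F2; auto.
  - destruct (lift_with_src g be b1 b3) as (a&a1&a2&a3).
    exists (tgt a), a. repeat split; auto.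
    apply lift_unique_src; auto.
    + boundary.
    + apply invertible_lwhisk; auto.
    + rewrite F2_lwhisk, a3; auto.
Qed.

Lemma reflects_normal_isofibration : reflects U normal_isofibration.
Proof.
  intros A B f [_ [clK [[Hlift Hnat] Hnorm]]].
  assert (Hsrc : forall X g (al : cell X B), src al = comp1 f g ->
            src (F2 U al) = comp1 (F1 U f) (F1 U g)) by (intros; boundary).
  apply normal_isofibration_of_lifts with
    (lift := fun X g al s => src s = g /\ invertible s /\
       forall p q, F2 U s = clK (F0 U X) (F1 U g) (F2 U al) p q).
  - intros X g al p q.
    destruct (Hlift _ _ _ (Hsrc _ _ _ p) (invertible_F2 U al q)) as (c1&c2&_).
    destruct (lift_with_src g _ c1 c2) as (s&s1&s2&s3).
    exists s. repeat split; auto. intros; rewrite s3; apply cleavage_congr; auto.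
  - intros X g al s p q (s1&s2&s3). repeat split; auto.
    destruct (Hlift _ _ _ (Hsrc _ _ _ p) (invertible_F2 U al q)) as (_&_&c3).
    apply lift_unique_src; auto.
    + boundary.
    + apply invertible_lwhisk; auto.
    + rewrite F2_lwhisk, (s3 (Hsrc _ _ _ p) (invertible_F2 U al q)); auto.
  - intros X g al s1 s2 p q (s1a&s1b&s1c) (s2a&s2b&s2c).
    apply lift_unique_src; try congruence.
    rewrite (s1c (Hsrc _ _ _ p) (invertible_F2 U al q)),
      (s2c (Hsrc _ _ _ p) (invertible_F2 U al q)); auto.
  - intros Y X k g al s p q (s1&s2&s3). repeat split.
    + boundary.
    + apply invertible_rwhisk; auto.
    + intros p' q'.
      assert (pk : src (rwhisk (F2 U al) (F1 U k))
                   = comp1 (F1 U f) (comp1 (F1 U g) (F1 U k))) by boundary.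
      rewrite F2_rwhisk, (s3 (Hsrc _ _ _ p) (invertible_F2 U al q)),
        <- (Hnat _ _ _ _ _ (Hsrc _ _ _ p) _ pk (invertible_rwhisk _ _ (invertible_F2 U al q))).
      apply cleavage_congr; [symmetry; apply F1_comp1 | symmetry; apply F2_rwhisk].
  - intros X g. repeat split.
    + apply src_id2.
    + apply invertible_id2.
    + intros p q.
      assert (p' : src (id2 (comp1 (F1 U f) (F1 U g))) = comp1 (F1 U f) (F1 U g))
        by apply src_id2.
      rewrite F2_id2, <- (Hnorm _ _ p' (invertible_id2 _)).
      apply cleavage_congr; auto. rewrite F2_id2, F1_comp1; auto.
Qed.

End HomDiscreteIsofibrations.

Section Equivalences.
Context {C : TwoCat}.

Lemma equivalence_comp1 {A B D : obj C} (f1 : hom A B) (f2 : hom B D) :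
  equivalence C A B f1 -> equivalence C B D f2 -> equivalence C A D (comp1 f2 f1).
Proof.
  intros (g1&eta1&eps1&a1&a2&a3&a4&a5&a6) (g2&eta2&eps2&b1&b2&b3&b4&b5&b6).
  exists (comp1 g1 g2), (vcomp (lwhisk g1 (rwhisk eta2 f1)) eta1),
    (vcomp eps2 (lwhisk f2 (rwhisk eps1 g2))).
  repeat split; try boundary.
  - apply invertible_vcomp; [auto | apply invertible_lwhisk, invertible_rwhisk; auto | boundary].
  - apply invertible_vcomp; [apply invertible_lwhisk, invertible_rwhisk; auto | auto | boundary].
Qed.

Lemma equivalence_iso {A B : obj C} (f f' : hom A B) (th : cell A B) :
  src th = f -> tgt th = f' -> invertible th ->
  equivalence C A B f -> equivalence C A B f'.
Proof.
  intros t1 t2 [th' Hth] (g&eta&eps&a1&a2&a3&a4&a5&a6).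
  destruct (Hth) as (i1&i2&_&_).
  exists g, (vcomp (lwhisk g th) eta), (vcomp eps (rwhisk th' g)).
  repeat split; try boundary.
  - apply invertible_vcomp; [auto | apply invertible_lwhisk; exists th'; auto | boundary].
  - apply invertible_vcomp; [| auto | boundary].
    apply invertible_rwhisk, (invertible_inverse th); auto.
Qed.

Lemma equivalence_of_section_unit {A P : obj C} (u : hom P A) (i : hom A P) (e : cell P P) :
  comp1 u i = id1 A -> src e = id1 P -> tgt e = comp1 i u -> invertible e ->
  equivalence C P A u /\ equivalence C A P i.
Proof.
  intros ui e1 e2 [e' He]. destruct (He) as (i1&i2&_&_). split.
  - exists i, e, (id2 (comp1 u i)). repeat split; try boundary.
    + exists e'; auto.
    + apply invertible_id2.
  - exists u, (id2 (comp1 u i)), e'. repeat split; try boundary.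
    + apply invertible_id2.
    + apply (invertible_inverse e); auto.
Qed.

Lemma equivalence_repr_isofibration_section {A B : obj C} (f : hom A B) :
  equivalence C A B f -> repr_isofibration C A B f -> exists s, comp1 f s = id1 B.
Proof.
  intros (g&eta&eps&_&_&_&a4&a5&a6) Hf.
  destruct (Hf B g (id1 B) eps a4 a5 a6) as (s&al&_&<-&_&E).
  exists (tgt al). rewrite <- tgt_lwhisk, E; auto.
Qed.

Section AdjustedUnitCounit.
Context {A B : obj C} (f : hom A B) (g : hom B A) (eta : cell A A) (eps : cell B B).
Hypotheses (eta_src : src eta = id1 A) (eta_tgt : tgt eta = comp1 g f) (eta_inv : invertible eta)
  (eps_src : src eps = comp1 f g) (eps_tgt : tgt eps = id1 B) (eps_inv : invertible eps).

(* Any invertible [k0 : 1 => s f] is corrected to [(s (f k0)^-1) . k0], which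
   [f] sends to an identity because [f s = 1]. *)
Lemma section_unit (s : hom B A) : comp1 f s = id1 B ->
  exists k : cell A A, src k = id1 A /\ tgt k = comp1 s f /\ invertible k /\
    lwhisk f k = id2 f.
Proof.
  intros fs.
  destruct (invertible_rwhisk (comp1 s f) eta eta_inv) as [x Hx].
  destruct (Hx) as (x1&x2&_&_).
  assert (k0_inv : invertible (vcomp x eta)).
  { apply invertible_vcomp; [auto | | boundary].
    apply (invertible_inverse (rwhisk eta (comp1 s f))); auto. }
  destruct (invertible_lwhisk f _ k0_inv) as [ph Hph].
  destruct (Hph) as (p1&p2&p3&_).
  exists (vcomp (lwhisk s ph) (vcomp x eta)). repeat split; try boundary.
  - apply invertible_vcomp; [auto | | boundary].
    apply invertible_lwhisk, (invertible_inverse (lwhisk f (vcomp x eta))); auto.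
  - rewrite lwhisk_vcomp, <- lwhisk_comp1, fs, lwhisk_id1, p3 by boundary. boundary.
Qed.

Lemma section_iso_quasi_inverse (s : hom B A) : comp1 f s = id1 B ->
  exists d : cell B A, src d = g /\ tgt d = s /\ invertible d /\ lwhisk f d = eps.
Proof.
  intros fs. destruct (section_unit s fs) as (k&k1&k2&k3&k4).
  exists (vcomp (lwhisk s eps) (rwhisk k g)). repeat split; try boundary.
  - apply invertible_vcomp; [apply invertible_rwhisk | apply invertible_lwhisk | boundary]; auto.
  - rewrite lwhisk_vcomp, <- lwhisk_comp1, fs, lwhisk_id1, lwhisk_rwhisk, k4, rwhisk_id2
      by boundary.
    apply vcomp_id_r; boundary.
Qed.

Lemma retraction_counit (r : hom B A) : comp1 r f = id1 A ->
  exists k : cell B B, src k = comp1 f r /\ tgt k = id1 B /\ invertible k /\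
    rwhisk k f = id2 f.
Proof.
  intros rf.
  destruct (invertible_lwhisk (comp1 f r) eps eps_inv) as [x Hx].
  destruct (Hx) as (x1&x2&_&_).
  assert (k0_inv : invertible (vcomp eps x)).
  { apply invertible_vcomp; [| auto | boundary].
    apply (invertible_inverse (lwhisk (comp1 f r) eps)); auto. }
  destruct (invertible_rwhisk f _ k0_inv) as [ph Hph].
  destruct (Hph) as (p1&p2&_&p4).
  exists (vcomp (vcomp eps x) (rwhisk ph r)). repeat split; try boundary.
  - apply invertible_vcomp; [| auto | boundary].
    apply invertible_rwhisk, (invertible_inverse (rwhisk (vcomp eps x) f)); auto.
  - rewrite rwhisk_vcomp, <- rwhisk_comp1, rf, rwhisk_id1, p4 by boundary. boundary.
Qed.

Lemma retraction_iso_quasi_inverse (r : hom B A) : comp1 r f = id1 A ->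
  exists d : cell B A, src d = r /\ tgt d = g /\ invertible d /\ rwhisk d f = eta.
Proof.
  intros rf. destruct (retraction_counit r rf) as (k&k1&k2&k3&k4).
  exists (vcomp (lwhisk g k) (rwhisk eta r)). repeat split; try boundary.
  - apply invertible_vcomp; [apply invertible_rwhisk | apply invertible_lwhisk | boundary]; auto.
  - rewrite rwhisk_vcomp, <- rwhisk_comp1, rf, rwhisk_id1, <- lwhisk_rwhisk, k4, lwhisk_id2
      by boundary.
    apply vcomp_id_l; boundary.
Qed.
End AdjustedUnitCounit.
End Equivalences.

Section Pseudolimits.
Context {C : TwoCat} {A B : obj C} (f : hom A B) (P : obj C) (u : hom P A) (v : hom P B)
  (lam : cell P B) (HP : is_pseudolimit f P u v lam).

Lemma pseudolimit_cell_square {X : obj C} (s : cell X P) :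
  vcomp (lwhisk f (lwhisk u s)) (rwhisk lam (src s))
  = vcomp (rwhisk lam (tgt s)) (lwhisk v s).
Proof.
  destruct HP as (lam_src&lam_tgt&_).
  rewrite <- lwhisk_comp1, <- lam_tgt, <- lam_src. apply interchange.
Qed.

Lemma pseudolimit_cell_ext {X : obj C} (s1 s2 : cell X P) :
  src s1 = src s2 -> tgt s1 = tgt s2 ->
  lwhisk u s1 = lwhisk u s2 -> lwhisk v s1 = lwhisk v s2 -> s1 = s2.
Proof.
  destruct (HP) as (_&_&_&_&cell_univ).
  destruct (cell_univ X (src s1) (tgt s1) (lwhisk u s1) (lwhisk v s1))
    as [s [_ s_uniq]]; try boundary.
  - apply pseudolimit_cell_square.
  - intros e1 e2 e3 e4. transitivity s; [symmetry|]; apply s_uniq; repeat split; congruence.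
Qed.

Lemma pseudolimit_hom_ext {X : obj C} (m1 m2 : hom X P) :
  comp1 u m1 = comp1 u m2 -> comp1 v m1 = comp1 v m2 -> rwhisk lam m1 = rwhisk lam m2 ->
  m1 = m2.
Proof.
  intros e1 e2 e3. destruct (HP) as (lam_src&lam_tgt&lam_inv&cone_univ&_).
  destruct (cone_univ X (comp1 u m1) (comp1 v m1) (rwhisk lam m1)) as [m [_ m_uniq]].
  - boundary.
  - boundary.
  - apply invertible_rwhisk; auto.
  - transitivity m; [symmetry|]; apply m_uniq; repeat split; congruence.
Qed.

(* The target of [s] is pinned down by the square of [s], once [v s] can be cancelled. *)
Lemma pseudolimit_cell_unique {X : obj C} (s1 s2 : cell X P) :
  src s1 = src s2 -> lwhisk u s1 = lwhisk u s2 -> lwhisk v s1 = lwhisk v s2 ->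
  invertible (lwhisk v s1) -> s1 = s2.
Proof.
  intros e1 e2 e3 inv.
  assert (tu : comp1 u (tgt s1) = comp1 u (tgt s2)) by (rewrite <- !tgt_lwhisk, e2; auto).
  assert (tv : comp1 v (tgt s1) = comp1 v (tgt s2)) by (rewrite <- !tgt_lwhisk, e3; auto).
  apply pseudolimit_cell_ext; auto.
  destruct (HP) as (lam_src&lam_tgt&_).
  apply pseudolimit_hom_ext; auto.
  apply (vcomp_cancel_invertible_r _ _ (lwhisk v s1) inv); try boundary.
  rewrite <- pseudolimit_cell_square, e3, <- pseudolimit_cell_square, e1, e2; auto.
Qed.

Lemma pseudolimit_invertible_cell {X : obj C} (s : cell X P) :
  invertible (lwhisk u s) -> invertible (lwhisk v s) -> invertible s.
Proof.
  intros [ph Hph] [ps Hps].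
  destruct (Hph) as (ph1&ph2&_&_), (Hps) as (ps1&ps2&_&_).
  rewrite tgt_lwhisk in ph1; rewrite tgt_lwhisk in ps1.
  rewrite src_lwhisk in ph2; rewrite src_lwhisk in ps2.
  destruct (HP) as (lam_src&lam_tgt&_&_&cell_univ).
  destruct (cell_univ X (tgt s) (src s) ph ps) as [s' [(s1&s2&s3&s4) _]]; auto.
  { apply (vcomp_square_inverse (lwhisk f (lwhisk u s)) _ (lwhisk v s)); try boundary.
    - apply is_inverse_lwhisk; auto.
    - exact Hps.
    - apply pseudolimit_cell_square. }
  exists s'. repeat split; auto.
  - apply pseudolimit_cell_ext; try boundary.
    + rewrite lwhisk_vcomp, s3, lwhisk_id2 by boundary. destruct Hph as (_&_&->&_). boundary.
    + rewrite lwhisk_vcomp, s4, lwhisk_id2 by boundary. destruct Hps as (_&_&->&_). boundary.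
  - apply pseudolimit_cell_ext; try boundary.
    + rewrite lwhisk_vcomp, s3, lwhisk_id2 by boundary. destruct Hph as (_&_&_&->). boundary.
    + rewrite lwhisk_vcomp, s4, lwhisk_id2 by boundary. destruct Hps as (_&_&_&->). boundary.
Qed.

Lemma pseudolimit_factorization :
  exists i : hom A P, comp1 v i = f /\ equivalence C A P i /\ equivalence C P A u.
Proof.
  destruct (HP) as (lam_src&lam_tgt&lam_inv&cone_univ&cell_univ).
  destruct (cone_univ A (id1 A) f (id2 f)) as [i [(i1&i2&i3) _]];
    try boundary; try apply invertible_id2.
  destruct (cell_univ P (id1 P) (comp1 i u) (id2 u) lam) as [e [(e1&e2&e3&e4) _]];
    try boundary.
  { rewrite lwhisk_id2, rwhisk_id1, rwhisk_comp1, i3, rwhisk_id2, !vcomp_id_l; boundary. }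
  assert (e_inv : invertible e).
  { apply pseudolimit_invertible_cell; rewrite ?e3, ?e4; auto using invertible_id2. }
  exists i. split; auto. apply and_comm, (equivalence_of_section_unit u i e); auto.
Qed.

Lemma pseudolimit_proj_equivalence :
  equivalence C A B f -> equivalence C P B v.
Proof.
  intros Ef. destruct pseudolimit_factorization as (i&_&_&Eu).
  destruct (HP) as (lam_src&lam_tgt&[lam' Hlam]&_). destruct (Hlam) as (l1&l2&_&_).
  apply (equivalence_iso (comp1 f u) v lam'); try congruence.
  - apply (invertible_inverse lam); auto.
  - apply equivalence_comp1; auto.
Qed.

Lemma pseudolimit_proj_normal_isofibration : normal_isofibration C P B v.
Proof.
  destruct (HP) as (lam_src&lam_tgt&lam_inv&cone_univ&cell_univ).
  apply normal_isofibration_of_lifts with (lift := fun X m al s =>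
    src s = m /\ lwhisk u s = id2 (comp1 u m) /\ lwhisk v s = al).
  - intros X m al al_src [al' Hal]. destruct (Hal) as (a1&a2&a3&_).
    destruct (cone_univ X (comp1 u m) (tgt al) (vcomp (rwhisk lam m) al'))
      as [m' [(m1&m2&m3) _]]; try boundary.
    { apply invertible_vcomp; [apply (invertible_inverse al) | apply invertible_rwhisk | boundary];
        auto. }
    destruct (cell_univ X m m' (id2 (comp1 u m)) al) as [s [(s1&s2&s3&s4) _]]; try boundary.
    { rewrite m3, lwhisk_id2, vcomp_id_l, <- vcomp_assoc, a3, vcomp_id_r by boundary.
      boundary. }
    exists s. auto.
  - intros X m al s _ al_inv (s1&s2&s3). repeat split; auto.
    apply pseudolimit_invertible_cell; rewrite ?s2, ?s3; auto using invertible_id2.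
  - intros X m al s1 s2 _ al_inv (s11&s12&s13) (s21&s22&s23).
    apply pseudolimit_cell_unique; congruence.
  - intros Y X k m al s _ _ (s1&s2&s3). repeat split.
    + boundary.
    + rewrite lwhisk_rwhisk, s2, rwhisk_id2, comp1_assoc; auto.
    + rewrite lwhisk_rwhisk, s3; auto.
  - intros X m. repeat split; apply src_id2 || apply lwhisk_id2.
Qed.
End Pseudolimits.

Section Reflection.
Context {L K : TwoCat} (U : TwoFunctor L K) (HD : hom_discrete_isofibrations U).

Lemma reflects_retract_equivalence :
  reflects U equivalence -> reflects U retract_equivalence.
Proof.
  intros Hequiv A B f [EUf [s Us]]. split; [apply Hequiv; auto|].
  destruct (Hequiv A B f EUf) as (g&eta&eps&a1&a2&a3&a4&a5&a6).
  destruct (section_iso_quasi_inverse (F1 U f) (F1 U g) (F2 U eta) (F2 U eps)) with (s := s)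
    as (d&d1&d2&d3&d4); try boundary; auto using invertible_F2.
  destruct (lift_with_src U HD g d) as (d'&e1&e2&e3); auto.
  assert (fd' : lwhisk f d' = eps).
  { apply (lift_unique_src U HD); try boundary; auto using invertible_lwhisk.
    rewrite F2_lwhisk, e3; auto. }
  exists (tgt d'). rewrite <- tgt_lwhisk, fd'; auto.
Qed.

Lemma reflects_injective_equivalence :
  reflects U equivalence -> reflects U injective_equivalence.
Proof.
  intros Hequiv A B f [EUf [r rU]]. split; [apply Hequiv; auto|].
  destruct (Hequiv A B f EUf) as (g&eta&eps&a1&a2&a3&a4&a5&a6).
  destruct (retraction_iso_quasi_inverse (F1 U f) (F1 U g) (F2 U eta) (F2 U eps)) with (r := r)
    as (d&d1&d2&d3&d4); try boundary; auto using invertible_F2.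
  destruct (lift_with_tgt U HD g d) as (d'&e1&e2&e3); auto.
  assert (d'f : rwhisk d' f = eta).
  { apply (lift_unique_tgt U HD); try boundary; auto using invertible_rwhisk.
    rewrite F2_rwhisk, e3; auto. }
  exists (src d'). rewrite <- src_rwhisk, d'f; auto.
Qed.

Lemma reflects_normal_retract_equivalence :
  reflects U retract_equivalence -> reflects U normal_retract_equivalence.
Proof.
  intros Hretract A B f [RUf NUf].
  split; [apply Hretract | apply (reflects_normal_isofibration U HD)]; auto.
Qed.

End Reflection.

Lemma reflects_equivalence_of_normal_retract {L K : TwoCat} (U : TwoFunctor L K) :
  has_pseudolimits_of_arrows L -> preserves_pseudolimits_of_arrows U ->
  reflects U normal_retract_equivalence -> reflects U equivalence.
Proof.
  intros HL Hpres Hnormal A B f EUf.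
  destruct (HL A B f) as (P&u&v&lam&HP).
  pose proof (Hpres _ _ _ _ _ _ _ HP) as HUP.
  assert (EUv := pseudolimit_proj_equivalence _ _ _ _ _ HUP EUf).
  assert (NUv := pseudolimit_proj_normal_isofibration _ _ _ _ _ HUP).
  assert (Ev : normal_retract_equivalence L P B v).
  { apply Hnormal. split; [split|]; auto.
    apply equivalence_repr_isofibration_section; auto. apply NUv. }
  destruct (pseudolimit_factorization f P u v lam HP) as (i&<-&Ei&_).
  apply equivalence_comp1; auto. apply Ev.
Qed.

Theorem proposition3p16 (L K : TwoCat) (U : TwoFunctor L K) :
  has_pseudolimits_of_arrows L ->
  has_pseudolimits_of_arrows K ->
  preserves_pseudolimits_of_arrows U ->
  hom_discrete_isofibrations U ->
  reflects U repr_isofibration /\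
  reflects U normal_isofibration /\
  (reflects U equivalence <-> reflects U retract_equivalence) /\
  (reflects U retract_equivalence <-> reflects U normal_retract_equivalence) /\
  (reflects U equivalence -> reflects U injective_equivalence).
Proof.
  intros HL _ Hpres HD.
  pose proof (reflects_retract_equivalence U HD) as equiv_retract.
  pose proof (reflects_normal_retract_equivalence U HD) as retract_normal.
  pose proof (reflects_equivalence_of_normal_retract U HL Hpres) as normal_equiv.
  split; [apply reflects_repr_isofibration; auto|].
  split; [apply reflects_normal_isofibration; auto|].
  split; [split; auto|].
  split; [split; auto|].
  apply reflects_injective_equivalence; auto.
Qed.
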